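(* Let $\Lambda$ be a row-finite $k$-graph with no sources and let $\{t_\lambda\}_{\lambda\in\Lambda}$ be a permutative representation of $C^*(\Lambda)$ with index set $I$, sets $J_\lambda,K_\lambda$ and bijections $\tilde\sigma_\lambda:J_\lambda\to K_\lambda$, and let $E:I\to\Lambda^\infty$ be its encoding map. Then: (a) For each $i\in I$ and $n\in\mathbb N^k$ there are a unique $\lambda\in\Lambda^n$ and a unique $i_n\in J_\lambda$ with $\tilde\sigma_\lambda(i_n)=i$. Writing $\tilde\sigma^n(i):=i_n$, we have $\tilde\sigma_\lambda\circ\tilde\sigma^n(i)=i$ for all $i\in K_\lambda$ and $\tilde\sigma^n\circ\tilde\sigma_\lambda(i)=i$ for all $i\in J_\lambda$. (b) $\sigma_\lambda(E(i))=E(\tilde\sigma_\lambda(i))$ for all $\lambda\in\Lambda$ and $i\in J_\lambda$, and $\sigma^n(E(i))=E(\tilde\sigma^n(i))$ for all $n\in\mathbb N^k$ and $i\in I$.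
   Context: A $k$-graph ($k\ge1$) is a countable small category $\Lambda$ with a functor $d:\Lambda\to\mathbb N^k$ satisfying unique factorization: if $d(\lambda)=m+n$ there are unique $\mu,\nu$ with $\lambda=\mu\nu$, $d(\mu)=m$, $d(\nu)=n$. $\Lambda^0$ = vertices, $r,s$ = range, source, $\Lambda^n=d^{-1}(n)$, $v\Lambda^n=\{\lambda\in\Lambda^n:r(\lambda)=v\}$, $s(\lambda)\Lambda=\{\nu:r(\nu)=s(\lambda)\}$; row-finite: each $v\Lambda^n$ finite; no sources: each $v\Lambda^n$ nonempty. Infinite paths are degree-preserving functors $x:\Omega_k\to\Lambda$, where $\Omega_k$ has objects $\mathbb N^k$, morphisms $(p,q)$, $p\le q$, $d(p,q)=q-p$; $\Lambda^\infty$ is their set, $r(x)=x(0,0)$. Shift: $\sigma^m(x)(p,q)=x(p+m,q+m)$. Prefixing: for $r(x)=s(\lambda)$, $\sigma_\lambda(x)=\lambda x$ is the unique $y\in\Lambda^\infty$ with $y(0,d(\lambda))=\lambda$ and $\sigma^{d(\lambda)}(y)=x$. A representation of $C^*(\Lambda)$ is a family of partial isometries $\{t_\lambda\}$ satisfying (CK1) $\{t_v\}$ mutually orthogonal projections, (CK2) $t_\lambda t_\eta=t_{\lambda\eta}$ when $s(\lambda)=r(\eta)$, (CK3) $t_\lambda^*t_\lambda=t_{s(\lambda)}$, (CK4) $t_v=\sum_{\lambda\in v\Lambda^n}t_\lambda t_\lambda^*$. It is permutative if the Hilbert space has an orthonormal basis $\{e_i\}_{i\in I}$ such that for each $\lambda$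 there are $J_\lambda,K_\lambda\subseteq I$ and a bijection $\tilde\sigma_\lambda:J_\lambda\to K_\lambda$ with: (a) for each $n$, $\bigcup_{\lambda\in\Lambda^n}J_\lambda=\bigcup_{\lambda\in\Lambda^n}K_\lambda=I$; (b) for $\lambda\in\Lambda,\nu\in s(\lambda)\Lambda$: $K_\nu\subseteq J_\lambda$ and $\tilde\sigma_\lambda\circ\tilde\sigma_\nu=\tilde\sigma_{\lambda\nu}$; (c) $t_\lambda e_i=e_{\tilde\sigma_\lambda(i)}$ for $i\in J_\lambda$, $t_\lambda e_i=0$ otherwise; (d) $t_\lambda^*e_{\tilde\sigma_\lambda(i)}=e_i$ for $i\in J_\lambda$, and $t_\lambda^*e_j=0$ for $j\in K_{\lambda'}$ when $\lambda'\ne\lambda$, $d(\lambda')=d(\lambda)$. For such a representation the sets $K_\lambda$, $\lambda\in\Lambda^n$, partition $I$, and the encoding map $E:I\to\Lambda^\infty$ is the infinite path with $E(i)(0,n)=$ the unique $\lambda\in\Lambda^n$ with $i\in K_\lambda$. *)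

From HB Require Import structures.
From mathcomp Require Import all_boot all_order all_algebra.
From Stdlib Require Import ClassicalEpsilon.
Set Implicit Arguments. Unset Strict Implicit. Unset Printing Implicit Defensive.
Import Order.TTheory GRing.Theory Num.Theory.

Definition nk (k : nat) := {ffun 'I_k -> nat}.
Definition zk (k : nat) : nk k := [ffun => 0%N].
Definition addk k (m n : nk k) : nk k := [ffun i => (m i + n i)%N].
Definition subk k (q p : nk k) : nk k := [ffun i => (q i - p i)%N].
Definition lek k (m n : nk k) : bool := [forall i, (m i <= n i)%N].

(* A countable small category (objects kObj, morphisms kMor; composition
   kcomp l m = "l m", defined when ks l = kr m) with a degree functor
   kdeg into N^k satisfying the unique factorization property. *)
Record kgraph (k : nat) : Type := KGraph {
  kObj : countType;
  kMor : countType;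
  kr : kMor -> kObj;
  ks : kMor -> kObj;
  kid : kObj -> kMor;
  kcomp : kMor -> kMor -> kMor;
  kdeg : kMor -> nk k;
  kr_id : forall v, kr (kid v) = v;
  ks_id : forall v, ks (kid v) = v;
  kid_l : forall l, kcomp (kid (kr l)) l = l;
  kid_r : forall l, kcomp l (kid (ks l)) = l;
  kr_comp : forall l m, ks l = kr m -> kr (kcomp l m) = kr l;
  ks_comp : forall l m, ks l = kr m -> ks (kcomp l m) = ks m;
  kcompA : forall l m n, ks l = kr m -> ks m = kr n ->
      kcomp (kcomp l m) n = kcomp l (kcomp m n);
  kdeg_id : forall v, kdeg (kid v) = zk k;
  kdeg_comp : forall l m, ks l = kr m ->
      kdeg (kcomp l m) = addk (kdeg l) (kdeg m);
  kfact : forall l (m n : nk k), kdeg l = addk m n ->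
      exists! mn : kMor * kMor,
        [/\ ks mn.1 = kr mn.2, kcomp mn.1 mn.2 = l, kdeg mn.1 = m & kdeg mn.2 = n]
}.

Section KGraphDefs.
Variables (k : nat) (L : kgraph k).

Definition row_finite : Prop :=
  forall (v : kObj L) (n : nk k), exists s : seq (kMor L),
    uniq s /\ forall l, l \in s <-> (kr l = v /\ kdeg l = n).

Definition no_sources : Prop :=
  forall (v : kObj L) (n : nk k), exists l : kMor L, kr l = v /\ kdeg l = n.

(* An infinite path: a degree-preserving functor Omega_k -> Lambda, given by
   its values x p q on the morphisms (p,q), p <= q, of Omega_k
   (the values for p not <= q are irrelevant). The object map is p |-> x(p,p). *)
Definition inf_path (x : nk k -> nk k -> kMor L) : Prop :=
  [/\ forall p q, lek p q -> kdeg (x p q) = subk q p,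
      forall p, x p p = kid (kr (x p p)) &
      forall p q r, lek p q -> lek q r ->
        ks (x p q) = kr (x q r) /\ kcomp (x p q) (x q r) = x p r].

Definition path_eq (x y : nk k -> nk k -> kMor L) : Prop :=
  forall p q, lek p q -> x p q = y p q.

Definition path_range (x : nk k -> nk k -> kMor L) : kObj L := kr (x (zk k) (zk k)).

Definition path_shift (m : nk k) (x : nk k -> nk k -> kMor L) : nk k -> nk k -> kMor L :=
  fun p q => x (addk p m) (addk q m).

(* prefixing sigma_l x = l x : the unique infinite path y with
   y(0,d l) = l and sigma^{d l}(y) = x (chosen by epsilon) *)
Definition path_prefix (l : kMor L) (x : nk k -> nk k -> kMor L) : nk k -> nk k -> kMor L :=
  epsilon (inhabits x) (fun y => inf_path y /\ y (zk k) (kdeg l) = l /\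
                                 path_eq (path_shift (kdeg l) y) x).

End KGraphDefs.

Definition inner_product (C : numClosedFieldType) (H : lmodType C) (ip : H -> H -> C) : Prop :=
  [/\ forall a x y z, ip (a *: x + y) z = a * ip x z + ip y z,
      forall x y, ip x y = (ip y x)^*,
      forall x, 0 <= ip x x &
      forall x, ip x x = 0 -> x = 0]%R.

Definition orthonormal_basis (C : numClosedFieldType) (H : lmodType C)
    (ip : H -> H -> C) (I : Type) (e : I -> H) : Prop :=
  (forall i j, i = j -> ip (e i) (e j) = 1%R) /\
  (forall i j, i <> j -> ip (e i) (e j) = 0%R) /\
  (forall x, (forall i, ip x (e i) = 0%R) -> x = 0%R).

Definition lin_map (C : numClosedFieldType) (H : lmodType C) (f : H -> H) : Prop :=
  forall (a : C) (x y : H), f (a *: x + y)%R = (a *: f x + f y)%R.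

Definition ck_rep (k : nat) (L : kgraph k) (C : numClosedFieldType) (H : lmodType C)
    (ip : H -> H -> C) (t tstar : kMor L -> H -> H) : Prop :=
  (forall l, lin_map (t l) /\ lin_map (tstar l)) /\
  (forall l x y, ip (t l x) y = ip x (tstar l y)) /\
  (forall l x, t l (tstar l (t l x)) = t l x) /\
  [/\
      ((forall v x, t (kid v) (t (kid v) x) = t (kid v) x /\ tstar (kid v) x = t (kid v) x) /\
      (forall v w x, v <> w -> t (kid v) (t (kid w) x) = 0%R)),
      (forall l m x, ks l = kr m -> t (kcomp l m) x = t l (t m x)),
      (forall l x, tstar l (t l x) = t (kid (ks l)) x) &
      (forall v n (s : seq (kMor L)), uniq s ->
          (forall l, l \in s <-> (kr l = v /\ kdeg l = n)) ->
          forall x, t (kid v) x = (\sum_(l <- s) t l (tstar l x))%R)].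

Definition permutative (k : nat) (L : kgraph k) (C : numClosedFieldType) (H : lmodType C)
    (I : Type) (e : I -> H) (t tstar : kMor L -> H -> H)
    (J K : kMor L -> I -> Prop) (sig : kMor L -> I -> I) : Prop :=
  [/\
      (forall l, (forall i, J l i -> K l (sig l i)) /\
                 (forall i j, J l i -> J l j -> sig l i = sig l j -> i = j) /\
                 (forall j, K l j -> exists i, J l i /\ sig l i = j)),
      (forall n i, exists l, kdeg l = n /\ J l i) /\
      (forall n i, exists l, kdeg l = n /\ K l i),
      (forall l nu, kr nu = ks l ->
          (forall i, K nu i -> J l i) /\
          (forall i, J (kcomp l nu) i <-> J nu i) /\
          (forall i, J nu i -> sig l (sig nu i) = sig (kcomp l nu) i)),
      (forall l i, (J l i -> t l (e i) = e (sig l i)) /\ (~ J l i -> t l (e i) = 0%R)) &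
      (forall l i, J l i -> tstar l (e (sig l i)) = e i) /\
      (forall l l' j, l' <> l -> kdeg l' = kdeg l -> K l' j -> tstar l (e j) = 0%R)].

Definition encoding (k : nat) (L : kgraph k) (I : Type) (K : kMor L -> I -> Prop)
    (E : I -> nk k -> nk k -> kMor L) : Prop :=
  forall i, inf_path (E i) /\
    forall n, kdeg (E i (zk k) n) = n /\ K (E i (zk k) n) i.

Definition tsig_n (k : nat) (L : kgraph k) (I : Type) (J : kMor L -> I -> Prop)
    (sig : kMor L -> I -> I) (n : nk k) (i : I) : I :=
  epsilon (inhabits i) (fun j => exists l, kdeg l = n /\ J l j /\ sig l j = i).

From mathcomp Require Import all_boot all_order all_algebra.
From Stdlib Require Import ClassicalEpsilon.
Set Implicit Arguments. Unset Strict Implicit. Unset Printing Implicit Defensive.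
Import GRing.Theory.

(* Condition (d) makes the sets K_l, l in Lambda^n, pairwise disjoint: if
   sig_l j lay in K_l' with l' <> l of the same degree, then t_l^* would map
   the basis vector e_(sig_l j) both to e_j and to 0.  Hence every i lies in
   exactly one K_l with d(l) = n, which gives (a).  For (b), if j = sig_l i
   then for every r the paths E(j)(0, r + d l) and l E(i)(0, r) have the same
   degree and both have j in their K-set (by (b) of permutativity), so they
   coincide; unique factorization then identifies sigma^(d l)(E j) with E i and
   E j with the prefixed path l E(i). *)

Section Nk.
Variable k : nat.
Implicit Types m n p q r : nk k.

Lemma addkC m n : addk m n = addk n m.
Proof. by apply/ffunP=> x; rewrite !ffunE addnC. Qed.

Lemma add0k m : addk (zk k) m = m.
Proof. by apply/ffunP=> x; rewrite !ffunE. Qed.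

Lemma addk0 m : addk m (zk k) = m.
Proof. by rewrite addkC add0k. Qed.

Lemma addkK m n : subk (addk n m) m = n.
Proof. by apply/ffunP=> x; rewrite !ffunE addnK. Qed.

Lemma subkDr p q m : subk (addk q m) (addk p m) = subk q p.
Proof. by apply/ffunP=> x; rewrite !ffunE subnDr. Qed.

Lemma lek0 p : lek (zk k) p.
Proof. by apply/forallP=> x; rewrite ffunE. Qed.

Lemma lek_trans p q r : lek p q -> lek q r -> lek p r.
Proof.
move=> /forallP pq /forallP qr; apply/forallP=> x.
exact: leq_trans (pq x) (qr x).
Qed.

Lemma lek_addr p m : lek p (addk p m).
Proof. by apply/forallP=> x; rewrite ffunE leq_addr. Qed.

Lemma lek_addl p m : lek m (addk p m).
Proof. by apply/forallP=> x; rewrite ffunE leq_addl. Qed.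

Lemma lek_add2r p q m : lek p q -> lek (addk p m) (addk q m).
Proof. by move=> /forallP pq; apply/forallP=> x; rewrite !ffunE leq_add2r. Qed.

End Nk.

Section InfinitePaths.
Variables (k : nat) (L : kgraph k).
Implicit Types (a b : kMor L) (x y z : nk k -> nk k -> kMor L).

Lemma kfact_uniq a b (a' b' : kMor L) :
  ks a = kr b -> ks a' = kr b' -> kcomp a b = kcomp a' b' ->
  kdeg a = kdeg a' -> kdeg b = kdeg b' -> a = a' /\ b = b'.
Proof.
move=> sab sab' eab da db.
have [[u v] [_ uniq_uv]] := kfact (kdeg_comp sab).
have := uniq_uv (a', b') (And4 sab' (esym eab) (esym da) (esym db)).
by rewrite (uniq_uv (a, b) (And4 sab erefl erefl erefl)) => -[].
Qed.

Lemma inf_path_range x r : inf_path x -> kr (x (zk k) r) = path_range x.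
Proof.
case=> _ _ xcomp; have [s0r <-] := xcomp _ _ _ (lek0 (zk k)) (lek0 r).
by rewrite kr_comp.
Qed.

Lemma inf_path_shift m x : inf_path x -> inf_path (path_shift m x).
Proof.
case=> xdeg xid xcomp; split=> [p q pq | p | p q r pq qr]; rewrite /path_shift.
- by rewrite xdeg ?lek_add2r ?subkDr.
- exact: xid.
- exact: xcomp (lek_add2r m pq) (lek_add2r m qr).
Qed.

(* Every segment x(p, q) is a factor of x(0, q + m). *)
Lemma inf_path_eq_cofinal m y z : inf_path y -> inf_path z ->
  (forall r, y (zk k) (addk r m) = z (zk k) (addk r m)) -> path_eq y z.
Proof.
move=> [ydeg _ ycomp] [zdeg _ zcomp] yz p q pq.
have deg_yz p' q' : lek p' q' -> kdeg (y p' q') = kdeg (z p' q').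
  by move=> pq'; rewrite ydeg ?zdeg.
have qQ := lek_addr q m; have pQ := lek_trans pq qQ.
have [y0p y0Q] := ycomp _ _ _ (lek0 p) pQ; have [z0p z0Q] := zcomp _ _ _ (lek0 p) pQ.
have [_ ypQ] := kfact_uniq y0p z0p (etrans y0Q (etrans (yz q) (esym z0Q)))
  (deg_yz _ _ (lek0 p)) (deg_yz _ _ pQ).
have [ypq yqQ] := ycomp _ _ _ pq qQ; have [zpq zqQ] := zcomp _ _ _ pq qQ.
by have [] := kfact_uniq ypq zpq (etrans yqQ (etrans ypQ (esym zqQ)))
  (deg_yz _ _ pq) (deg_yz _ _ qQ).
Qed.

Lemma inf_path_eq_prefix_shift m y z : inf_path y -> inf_path z ->
  y (zk k) m = z (zk k) m -> path_eq (path_shift m y) (path_shift m z) ->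
  path_eq y z.
Proof.
move=> yp zp y0m shift_yz; apply: (inf_path_eq_cofinal (m := m)) => // r.
have [[_ _ ycomp] [_ _ zcomp]] := (yp, zp).
rewrite -(ycomp _ _ _ (lek0 m) (lek_addl r m)).2.
rewrite -(zcomp _ _ _ (lek0 m) (lek_addl r m)).2 y0m.
by have := shift_yz _ _ (lek0 r); rewrite /path_shift add0k => ->.
Qed.

Lemma path_prefix_eq l x y : inf_path y -> y (zk k) (kdeg l) = l ->
  path_eq (path_shift (kdeg l) y) x -> path_eq (path_prefix l x) y.
Proof.
move=> yp y0 shift_yx.
have [zp [z0 shift_zx]] : inf_path (path_prefix l x) /\
    path_prefix l x (zk k) (kdeg l) = l /\
    path_eq (path_shift (kdeg l) (path_prefix l x)) x.
  by rewrite /path_prefix; eapply epsilon_spec; exists y.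
apply: (inf_path_eq_prefix_shift (m := kdeg l) zp yp); first by rewrite z0 y0.
by move=> p q pq; rewrite shift_zx // shift_yx.
Qed.

End InfinitePaths.

Lemma inner_product_0l (C : numClosedFieldType) (H : lmodType C)
    (ip : H -> H -> C) (x : H) :
  inner_product ip -> ip 0%R x = 0%R.
Proof.
case=> ip_lin _ _ _; have := ip_lin 1%R 0%R 0%R x.
by rewrite scaler0 addr0 mul1r => /eqP; rewrite eq_sym -subr_eq0 addrK => /eqP.
Qed.

Lemma orthonormal_basis_neq0 (C : numClosedFieldType) (H : lmodType C)
    (ip : H -> H -> C) (I : Type) (e : I -> H) (i : I) :
  inner_product ip -> orthonormal_basis ip e -> e i <> 0%R.
Proof.
move=> hip [e_norm _] ei0; have := e_norm i i erefl.
by rewrite ei0 inner_product_0l // => /eqP; rewrite eq_sym oner_eq0.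
Qed.

Section Permutative.
Variables (k : nat) (L : kgraph k) (C : numClosedFieldType) (H : lmodType C).
Variables (ip : H -> H -> C) (I : Type) (e : I -> H) (t tstar : kMor L -> H -> H).
Variables (J K : kMor L -> I -> Prop) (sig : kMor L -> I -> I).
Hypotheses (hip : inner_product ip) (honb : orthonormal_basis ip e).
Hypothesis hperm : permutative e t tstar J K sig.
Implicit Types (l nu : kMor L) (i j : I).

Lemma sig_K l i : J l i -> K l (sig l i).
Proof. by case: hperm => hbij _ _ _ _; apply: (hbij l).1. Qed.

Lemma sig_inj l i j : J l i -> J l j -> sig l i = sig l j -> i = j.
Proof. by case: hperm => hbij _ _ _ _; apply: (hbij l).2.1. Qed.

Lemma sig_surj l j : K l j -> exists i, J l i /\ sig l i = j.
Proof. by case: hperm => hbij _ _ _ _; apply: (hbij l).2.2. Qed.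

Lemma K_cover n i : exists l, kdeg l = n /\ K l i.
Proof. by case: hperm => _ [_ cover] _ _ _; apply: cover. Qed.

Lemma J_comp l nu i : kr nu = ks l -> J (kcomp l nu) i <-> J nu i.
Proof. by case: hperm => _ _ hcomp _ _ lnu; apply: (hcomp l nu lnu).2.1. Qed.

Lemma sig_comp l nu i : kr nu = ks l -> J nu i ->
  sig l (sig nu i) = sig (kcomp l nu) i.
Proof. by case: hperm => _ _ hcomp _ _ lnu; apply: (hcomp l nu lnu).2.2. Qed.

Lemma K_sub_J l nu i : kr nu = ks l -> K nu i -> J l i.
Proof. by case: hperm => _ _ hcomp _ _ lnu; apply: (hcomp l nu lnu).1. Qed.

Lemma K_disjoint l l' i : K l i -> K l' i -> kdeg l = kdeg l' -> l = l'.
Proof.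
move=> Kli Kl'i dll'; case: (eqVneq l l') => // /eqP nll'; exfalso.
have [j [Jlj sj]] := sig_surj Kli; subst i.
case: hperm => _ _ _ _ [tstar_sig tstar_K].
have := tstar_K l l' (sig l j) (nesym nll') (esym dll') Kl'i.
by rewrite tstar_sig //; apply: orthonormal_basis_neq0 hip honb.
Qed.

Lemma sig_inj_deg l l' i j : kdeg l = kdeg l' -> J l i -> J l' j ->
  sig l i = sig l' j -> l = l' /\ i = j.
Proof.
move=> dll' Jli Jl'j sij.
have Kl' : K l' (sig l i) by rewrite sij; apply: sig_K.
have ll' := K_disjoint (sig_K Jli) Kl' dll'; subst l'.
by split=> //; apply: sig_inj sij.
Qed.

Lemma K_comp l nu i : kr nu = ks l -> K nu i -> J l i -> K (kcomp l nu) (sig l i).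
Proof.
move=> lnu Knu Jl; have [i' [Jnu <-]] := sig_surj Knu.
by rewrite sig_comp //; apply: sig_K; rewrite J_comp.
Qed.

Lemma J_kid_ks l i : J l i -> J (kid (ks l)) i.
Proof. by move=> Jl; rewrite -J_comp ?kr_id // kid_r. Qed.

Lemma sig_kid v i : J (kid v) i -> sig (kid v) i = i.
Proof.
move=> Jvi; have vv : kr (kid v) = ks (kid v) by rewrite kr_id ks_id.
have vv_id : kcomp (kid v) (kid v) = kid v by have := kid_l (kid v); rewrite kr_id.
have sig_idem : sig (kid v) (sig (kid v) i) = sig (kid v) i by rewrite sig_comp ?vv_id.
exact: sig_inj (K_sub_J vv (sig_K Jvi)) Jvi sig_idem.
Qed.

Lemma tsig_nP n i : exists l,
  [/\ kdeg l = n, J l (tsig_n J sig n i) & sig l (tsig_n J sig n i) = i].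
Proof.
have [j [l [dl Jlj slj]]] : exists j l, [/\ kdeg l = n, J l j & sig l j = i].
  have [l [dl Kli]] := K_cover n i; have [j [Jlj slj]] := sig_surj Kli.
  by exists j, l.
have [l' [dl' [Jl' sl']]] : exists l, kdeg l = n /\ J l (tsig_n J sig n i) /\
    sig l (tsig_n J sig n i) = i.
  by rewrite /tsig_n; eapply epsilon_spec; exists j, l.
by exists l'; split.
Qed.

Lemma sig_deg_exists_unique i n : exists! p : kMor L * I,
  [/\ kdeg p.1 = n, J p.1 p.2 & sig p.1 p.2 = i].
Proof.
have [l [dl Jl sl]] := tsig_nP n i.
exists (l, tsig_n J sig n i); split=> // [[l' j']] /= [dl' Jl' sl'].
by have [-> ->] := sig_inj_deg (etrans dl (esym dl')) Jl Jl' (etrans sl (esym sl')).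
Qed.

Lemma tsig_nK l i : J l i -> tsig_n J sig (kdeg l) (sig l i) = i.
Proof.
move=> Jli; have [l' [dl' Jl' sl']] := tsig_nP (kdeg l) (sig l i).
by have [_ ->] := sig_inj_deg dl' Jl' Jli sl'.
Qed.

Lemma sig_tsig_n l i : K l i -> sig l (tsig_n J sig (kdeg l) i) = i.
Proof.
move=> Kli; have [l' [dl' Jl' sl']] := tsig_nP (kdeg l) i.
have Kl'i : K l' i by rewrite -sl'; apply: sig_K.
by rewrite -(K_disjoint Kli Kl'i (esym dl')) in sl'.
Qed.

Variable E : I -> nk k -> nk k -> kMor L.
Hypothesis hE : encoding K E.

Lemma encoding_range l i : J l i -> path_range (E i) = ks l.
Proof.
move=> Jli; have [[_ Eid _] Edeg] := hE i.
have [_ K0] := Edeg (zk k); rewrite Eid in K0.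
have Kw : K (kid (ks l)) i.
  by have Jw := J_kid_ks Jli; have := sig_K Jw; rewrite sig_kid.
have := K_disjoint K0 Kw (etrans (kdeg_id _) (esym (kdeg_id _))).
by move/(congr1 (@kr _ L)); rewrite !kr_id.
Qed.

Lemma encoding_kr l i r : J l i -> kr (E i (zk k) r) = ks l.
Proof. by move=> Jli; rewrite (inf_path_range _ (hE i).1) (encoding_range Jli). Qed.

Lemma encoding_sig l i r : J l i ->
  E (sig l i) (zk k) (addk r (kdeg l)) = kcomp l (E i (zk k) r).
Proof.
move=> Jli; have [dr Kr] := (hE i).2 r.
have [dj Kj] := (hE (sig l i)).2 (addk r (kdeg l)).
apply: K_disjoint Kj (K_comp (encoding_kr r Jli) Kr Jli) _.
by rewrite dj kdeg_comp ?(encoding_kr r Jli) // dr addkC.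
Qed.

Lemma encoding_sig_deg l i : J l i -> E (sig l i) (zk k) (kdeg l) = l.
Proof.
move=> Jli; have := encoding_sig (zk k) Jli; rewrite add0k => ->.
by case: (hE i).1 => _ -> _; rewrite -/(path_range (E i)) (encoding_range Jli) kid_r.
Qed.

Lemma encoding_sig_shift l i : J l i ->
  path_eq (path_shift (kdeg l) (E (sig l i))) (E i).
Proof.
move=> Jli; have [[jdeg _ jcomp] _] := hE (sig l i).
apply: (inf_path_eq_cofinal (m := zk k) (inf_path_shift _ (hE _).1) (hE i).1) => r.
rewrite /path_shift add0k !addk0.
have [lEj Ej_split] := jcomp _ _ _ (lek0 (kdeg l)) (lek_addl r (kdeg l)).
rewrite encoding_sig_deg // encoding_sig // in lEj Ej_split.
have deg_eq : kdeg (E (sig l i) (kdeg l) (addk r (kdeg l))) = kdeg (E i (zk k) r).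
  by rewrite jdeg ?lek_addl // addkK (proj1 ((hE i).2 r)).
by have [] := kfact_uniq lEj (esym (encoding_kr r Jli)) Ej_split erefl deg_eq.
Qed.

End Permutative.

Theorem proposition4p3 (k : nat) (hk : (0 < k)%N) (L : kgraph k)
  (hrf : row_finite L) (hns : no_sources L)
  (C : numClosedFieldType) (H : lmodType C) (ip : H -> H -> C)
  (hip : inner_product ip)
  (I : Type) (e : I -> H) (honb : orthonormal_basis ip e)
  (t tstar : kMor L -> H -> H) (hrep : ck_rep ip t tstar)
  (J K : kMor L -> I -> Prop) (sig : kMor L -> I -> I)
  (hperm : permutative e t tstar J K sig)
  (E : I -> nk k -> nk k -> kMor L) (hE : encoding K E) :
  (* (a) *)
  (forall (i : I) (n : nk k), exists! p : kMor L * I,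
      [/\ kdeg p.1 = n, J p.1 p.2 & sig p.1 p.2 = i]) /\
  (forall l i, K l i -> sig l (tsig_n J sig (kdeg l) i) = i) /\
  (forall l i, J l i -> tsig_n J sig (kdeg l) (sig l i) = i) /\
  (* (b) *)
  (forall l i, J l i ->
      path_range (E i) = ks l /\ path_eq (path_prefix l (E i)) (E (sig l i))) /\
  (forall n i, path_eq (path_shift n (E i)) (E (tsig_n J sig n i))).
Proof.
split; first exact: sig_deg_exists_unique hip honb hperm.
split; first exact: sig_tsig_n hip honb hperm.
split; first exact: tsig_nK hip honb hperm.
split=> [l i Jli | n i].
  split; first exact: (encoding_range hip honb hperm hE Jli).
  apply: path_prefix_eq; first exact: (hE _).1.
    exact: (encoding_sig_deg hip honb hperm hE Jli).
  exact: (encoding_sig_shift hip honb hperm hE Jli).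
have [l [dl Jl sl]] := tsig_nP hperm n i.
by have := encoding_sig_shift hip honb hperm hE Jl; rewrite sl dl.
Qed.
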